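(* Let $T=(T_a,T_b)$ be a rooted binary phylogenetic $X$-tree with strictly positive edge lengths and maximal pendant subtrees $T_a,T_b$ with leaf sets $X_a,X_b$. Let $X'\subset X$ be such that $X_a\not\subseteq X'$ and $X_b\not\subseteq X'$, and let $\widetilde T=T_{\widetilde X}$ with $\widetilde X=X\setminus X'$. Then $FP_T(x)\leq FP_{\widetilde T}(x)$ for all $x\in\widetilde X$.
   Context: A rooted binary phylogenetic $X$-tree ($X$ finite, $|X|\ge 2$ here) is a rooted tree whose root $\rho$ has in-degree 0 and out-degree 2, all edges directed away from $\rho$, all other interior vertices have in-degree 1 and out-degree 2, and whose leaves are bijectively labelled by $X$. $T=(T_a,T_b)$ denotes the decomposition into the two maximal pendant subtrees rooted at the children $a,b$ of $\rho$, with leaf sets $X_a,X_b$. Every edge $e$ has a strictly positive length $\lambda_e$. The Fair Proportion index of $x\in X$ is $FP_T(x)=\sum_{e\in P(T;\rho,x)}\lambda_e/D_e$, where $P(T;\rho,x)$ is the path from $\rho$ to $x$ and $D_e$ is the number of leaves descended from $e$. For $Y\subseteq X$, the induced subtree $T_Y$ is obtained from the minimal subtree of $T$ connecting $Y$ by suppressing all non-root vertices of in- and out-degree 1, adding the lengths of merged edges; if the root then has out-degree 1, it and its incident edge are deleted. *)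

From HB Require Import structures.
From mathcomp Require Import all_boot all_order all_algebra.
Set Implicit Arguments. Unset Strict Implicit. Unset Printing Implicit Defensive.
Import Order.TTheory GRing.Theory Num.Theory.
Local Open Scope ring_scope.

(* A rooted binary tree whose leaves are labelled by elements of L.
   [Node l1 t1 l2 t2] is an interior vertex with two child subtrees t1, t2;
   l1 (resp. l2) is the length of the edge from this vertex to the root of t1
   (resp. t2).  Every edge of the tree is recorded exactly once this way. *)
Inductive ptree (R L : Type) : Type :=
| Leaf of L
| Node of R & ptree R L & R & ptree R L.

Arguments Leaf {R L} _.
Arguments Node {R L} _ _ _ _.

Section Defs.
Variables (R : realFieldType) (L : eqType).

Fixpoint leaves (t : ptree R L) : seq L :=
  match t with
  | Leaf x => [:: x]
  | Node _ t1 _ t2 => leaves t1 ++ leaves t2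
  end.

Fixpoint pos_lengths (t : ptree R L) : Prop :=
  match t with
  | Leaf _ => True
  | Node l1 t1 l2 t2 => 0 < l1 /\ pos_lengths t1 /\ 0 < l2 /\ pos_lengths t2
  end.

(* rooted binary phylogenetic X-tree with |X| >= 2 and positive edge lengths:
   root of out-degree 2 (a Node), leaves bijectively labelled (uniq labels). *)
Definition phylo_tree (t : ptree R L) : Prop :=
  [/\ (if t is Node _ _ _ _ then True else False), uniq (leaves t) & pos_lengths t].

(* Fair Proportion index: sum over the edges e on the path from the root to x
   of lambda_e / D_e, D_e = number of leaves below e. *)
Fixpoint FP (t : ptree R L) (x : L) : R :=
  match t with
  | Leaf _ => 0
  | Node l1 t1 l2 t2 =>
      if x \in leaves t1 then l1 / (size (leaves t1))%:R + FP t1 x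
      else if x \in leaves t2 then l2 / (size (leaves t2))%:R + FP t2 x
      else 0
  end.

(* Returns None if no
   leaf of Y is below; otherwise Some (a, s) where s is the induced subtree
   (degree-2 vertices suppressed, merged edge lengths added) and a is the total
   length of suppressed edges that must be added to the edge entering s. *)
Fixpoint restrict (Y : pred L) (t : ptree R L) : option (R * ptree R L) :=
  match t with
  | Leaf x => if Y x then Some (0, Leaf x) else None
  | Node l1 t1 l2 t2 =>
      match restrict Y t1, restrict Y t2 with
      | Some (a1, s1), Some (a2, s2) => Some (0, Node (l1 + a1) s1 (l2 + a2) s2)
      | Some (a1, s1), None => Some (l1 + a1, s1)
      | None, Some (a2, s2) => Some (l2 + a2, s2)
      | None, None => None
      end
  end.

(* Induced subtree T_Y.  A leftover length above the (new) root corresponds to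
   the deleted root edge and is discarded.  If Y contains no leaf of t the
   result is irrelevant (we return t). *)
Definition induced (t : ptree R L) (Y : pred L) : ptree R L :=
  match restrict Y t with
  | Some (_, s) => s
  | None => t
  end.

End Defs.

From mathcomp Require Import all_boot all_order all_algebra.
From mathcomp Require Import lra.
Import Order.TTheory GRing.Theory Num.Theory.
Local Open Scope ring_scope.

(* Call [branch l t x] the share of a leaf x in a pendant subtree
   t hanging from an edge of length l: it is l/|t| + FP_t(x) if x is a leaf of
   t, and 0 otherwise.  For a tree with distinct labels, the Fair Proportion
   index at the root is the sum of the shares in its two pendant subtrees.
   The central lemma [branch_restrict] says that restricting a pendant
   subtree t to a set Y of labels can only increase the share of a kept leaf:
   if [restrict Y t = Some (a, s)] then the share of x in t (edge l) is at most
   its share in s, hung from the merged edge of length l + a.  It is proved by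
   induction on t: every edge term l/|t| only grows since |s| <= |t|, and
   when one child disappears, its sibling's edge is merged with the parent
   edge, which is compatible with the shares.  For the theorem, both pendant
   subtrees Ta and Tb keep a leaf, so the root of T survives in the induced
   tree and the inequality is the sum of the two instances of the lemma. *)

Section FairProportion.
Context {R : realFieldType} {L : eqType}.

Definition branch (l : R) (t : ptree R L) (x : L) : R :=
  if x \in leaves t then l / (size (leaves t))%:R + FP t x else 0.

Lemma FP_NodeE (l1 l2 : R) (t1 t2 : ptree R L) (x : L) :
  uniq (leaves (Node l1 t1 l2 t2)) ->
  FP (Node l1 t1 l2 t2) x = branch l1 t1 x + branch l2 t2 x.
Proof.
rewrite /= cat_uniq => /and3P [_ /hasPn disj _]; rewrite /branch.
case: ifP => [x1|_]; last by rewrite add0r.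
have /negbTE -> : x \notin leaves t2 by apply/negP => /disj; rewrite x1.
by rewrite addr0.
Qed.

Lemma uniq_children {l1 l2 : R} {t1 t2 : ptree R L} :
  uniq (leaves (Node l1 t1 l2 t2)) -> uniq (leaves t1) /\ uniq (leaves t2).
Proof. by rewrite /= cat_uniq => /and3P [u1 _ u2]. Qed.

Lemma branch_addl (l m : R) (t : ptree R L) (x : L) : x \in leaves t ->
  branch (l + m) t x = l / (size (leaves t))%:R + branch m t x.
Proof. by rewrite /branch => ->; rewrite mulrDl addrA. Qed.

Lemma share_antimono (l : R) (m n : nat) :
  0 <= l -> (0 < m)%N -> (m <= n)%N -> l / n%:R <= l / m%:R.
Proof.
move=> l_ge0 m_gt0 le_mn; apply: ler_wpM2l => //.
by rewrite lef_pV2 ?posrE ?ltr0n ?ler_nat // (leq_trans m_gt0).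
Qed.

Variable Y : pred L.

Lemma restrict_spec {t : ptree R L} : pos_lengths t ->
  match restrict Y t with
  | Some (a, s) => leaves s = filter Y (leaves t) /\ 0 <= a
  | None => filter Y (leaves t) = [::]
  end.
Proof.
elim: t => [x|l1 t1 IH1 l2 t2 IH2] /=; first by case: (Y x).
move=> [/ltW l1_ge0 [p1 [/ltW l2_ge0 p2]]].
move: (IH1 p1) (IH2 p2); rewrite filter_cat.
case: (restrict Y t1) => [[a1 s1]|]; case: (restrict Y t2) => [[a2 s2]|] /=.
- by move=> [-> _] [-> _].
- by move=> [-> a1_ge0] ->; rewrite cats0; split=> //; apply: addr_ge0.
- by move=> -> [-> a2_ge0]; split=> //; apply: addr_ge0.
- by move=> -> ->.
Qed.

Lemma restrict_some {t : ptree R L} {x : L} : pos_lengths t ->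
  x \in leaves t -> Y x -> exists a s, restrict Y t = Some (a, s).
Proof.
move=> pt xt Yx; move: (restrict_spec pt).
case: (restrict Y t) => [[a s]|]; first by eauto.
move=> filt0; have : x \in filter Y (leaves t) by rewrite mem_filter Yx xt.
by rewrite filt0.
Qed.

Lemma branch_restrict_none (l : R) {t : ptree R L} {x : L} : pos_lengths t ->
  restrict Y t = None -> Y x -> branch l t x = 0.
Proof.
move=> pt rt Yx; rewrite /branch; case: ifP => // xt.
by have [a [s]] := restrict_some pt xt Yx; rewrite rt.
Qed.

Lemma branch_restrict {t : ptree R L} : pos_lengths t -> uniq (leaves t) ->
  forall {l a : R} {s : ptree R L} {x : L}, 0 <= l -> Y x ->
  restrict Y t = Some (a, s) -> branch l t x <= branch (l + a) s x.
Proof.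
elim: t => [y|l1 t1 IH1 l2 t2 IH2] pt ut l a s x l_ge0 Yx rt.
  by move: rt => /=; case: (Y y) => // -[<- <-]; rewrite addr0.
have := restrict_spec pt; rewrite rt => -[ls _].
have us : uniq (leaves s) by rewrite ls filter_uniq.
have [xt|xt] := boolP (x \in leaves (Node l1 t1 l2 t2)); last first.
  have /negbTE xs : x \notin leaves s by rewrite ls mem_filter (negbTE xt) andbF.
  by rewrite /branch (negbTE xt) xs.
have xs : x \in leaves s by rewrite ls mem_filter Yx xt.
have shrink : l / (size (leaves (Node l1 t1 l2 t2)))%:R <= l / (size (leaves s))%:R.
  apply: share_antimono => //; first by case: (leaves s) xs.
  by rewrite ls size_filter count_size.
move: pt => [/ltW l1_ge0 [p1 [/ltW l2_ge0 p2]]].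
have [u1 u2] := uniq_children ut.
rewrite {1}/branch xt FP_NodeE //.
move: rt xs us shrink => /=.
case e1: (restrict Y t1) => [[a1 s1]|]; case e2: (restrict Y t2) => [[a2 s2]|] //.
- move=> [<- <-] xs us shrink.
  rewrite [branch _ (Node _ _ _ _) x]/branch xs FP_NodeE // addr0.
  have := IH1 p1 u1 _ _ _ _ l1_ge0 Yx e1; have := IH2 p2 u2 _ _ _ _ l2_ge0 Yx e2.
  lra.
- move=> [<- <-] xs _ shrink; rewrite addrA branch_addl //.
  rewrite (branch_restrict_none l2 p2 e2 Yx).
  have := IH1 p1 u1 _ _ _ _ l1_ge0 Yx e1; lra.
- move=> [<- <-] xs _ shrink; rewrite addrA branch_addl //.
  rewrite (branch_restrict_none l1 p1 e1 Yx).
  have := IH2 p2 u2 _ _ _ _ l2_ge0 Yx e2; lra.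
Qed.

End FairProportion.

Lemma not_subset_witness (L : eqType) (s X' : seq L) :
  ~ {subset s <= X'} -> exists2 y, y \in s & y \notin X'.
Proof.
move=> not_sub; have [/hasP [y ys yX] | /hasPn all_in] := boolP (has [predC X'] s).
  by exists y.
by exfalso; apply: not_sub => y /all_in; rewrite negbK.
Qed.

Theorem lemma1 (R : realFieldType) (L : eqType)
    (la lb : R) (Ta Tb : ptree R L) (X' : seq L) :
  phylo_tree (Node la Ta lb Tb) ->
  {subset X' <= leaves (Node la Ta lb Tb)} ->
  ~ {subset leaves Ta <= X'} ->
  ~ {subset leaves Tb <= X'} ->
  let T := Node la Ta lb Tb in
  let Xt := [pred x | (x \in leaves T) && (x \notin X')] in
  forall x : L, x \in Xt -> FP T x <= FP (induced T Xt) x.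
Proof.
move=> [_ uT pT] _ /not_subset_witness [ya yaTa yaX] /not_subset_witness [yb ybTb ybX].
move=> T Xt x Xx; move: (pT) => [/ltW la_ge0 [pa [/ltW lb_ge0 pb]]].
have [ua ub] := uniq_children uT.
have [a1 [s1 ea]] : exists a s, restrict Xt Ta = Some (a, s).
  by apply: (restrict_some Xt pa yaTa); rewrite inE /= mem_cat yaTa yaX.
have [a2 [s2 eb]] : exists a s, restrict Xt Tb = Some (a, s).
  by apply: (restrict_some Xt pb ybTb); rewrite inE /= mem_cat ybTb orbT ybX.
have eT : restrict Xt T = Some (0, Node (la + a1) s1 (lb + a2) s2) by rewrite /= ea eb.
have := restrict_spec Xt pT; rewrite eT => -[lsT _].
rewrite /induced eT FP_NodeE // FP_NodeE ?lsT ?filter_uniq //.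
by apply: lerD; [exact: (branch_restrict Xt pa ua la_ge0 Xx ea)
              | exact: (branch_restrict Xt pb ub lb_ge0 Xx eb)].
Qed.
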